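(* Let $\tau$ be a relational vocabulary all of whose symbols have arity at most $2$. Then $\mathrm{UF}_1^=(\tau)\leq\mathrm{FOC}^2(\tau)$. Moreover, if $\tau$ contains a binary relation symbol, then $\mathrm{FOC}^2(\tau)\not\leq\mathrm{UF}_1^=(\tau)$, so the inclusion is strict.
   Context: Vocabularies are relational (relation symbols of positive finite arities, no constants or function symbols). A $k$-ary $\tau$-atom is an atomic formula (a relational atom $R(z_1,\dots,z_m)$ with $R\in\tau$, or an equality $z=z'$) having exactly $k$ distinct free variables. For a finite set $V$ of variables, a $V$-uniform set is a finite set of relational (non-equality) $\tau$-atoms $R(z_1,\dots,z_m)$ with $\{z_1,\dots,z_m\}=V$. The set $\mathrm{UF}_1^=(\tau)$ is the smallest set $\mathcal F$ such that: (1) every unary $\tau$-atom, and $\bot,\top$, are in $\mathcal F$; (2) every equality $x=y$ is in $\mathcal F$; (3) $\mathcal F$ is closed under $\neg$ and $\wedge$; (4) if $X=\{x_0,\dots,x_k\}$ is a finite set of variables, $U$ a finite set of formulas of $\mathcal F$ with free variables in $X$, $V\subseteq X$, $F$ a $V$-uniform set of $\tau$-atoms, and $\varphi$ a Boolean combination of formulas in $U\cup F$, then $\exists x_1\dots\exists x_k\,\varphi\in\mathcal F$ and $\exists x_0\dots\exists x_k\,\varphi\in\mathcal F$. $\forall$ and other connectives are abbreviations. $\mathrm{FOC}^2(\tau)$ is the set of first-order $\tau$-formulas with equality, extended by counting quantifiers $\exists^{\geq k}$ ($k$ a positive integer), that use only two variable symbols. For sets of formulas $\mathcal L,\mathcal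 L'$, $\mathcal L\leq\mathcal L'$ means every sentence of $\mathcal L$ is equivalent to some sentence of $\mathcal L'$. *)

From mathcomp Require Import all_boot.
From Stdlib Require List.
Set Implicit Arguments. Unset Strict Implicit. Unset Printing Implicit Defensive.

Section Syntax.
Variables (S : Type) (ar : S -> nat).

Inductive form : Type :=
| FBot : form
| FTop : form
| FAtom (R : S) (args : 'I_(ar R) -> nat) : form
| FEq (x y : nat) : form
| FNeg (f : form) : form
| FAnd (f g : form) : form
| FEx (x : nat) (f : form) : form
| FCnt (k : nat) (x : nat) (f : form) : form.

Definition atom_vars (R : S) (args : 'I_(ar R) -> nat) : seq nat :=
  map args (enum 'I_(ar R)).

Fixpoint fv (f : form) : seq nat :=
  match f with
  | FBot | FTop => [::]
  | FAtom R args => atom_vars args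
  | FEq x y => [:: x; y]
  | FNeg g => fv g
  | FAnd g h => fv g ++ fv h
  | FEx x g => [seq z <- fv g | z != x]
  | FCnt _ x g => [seq z <- fv g | z != x]
  end.

Definition sentence (f : form) : Prop := fv f = [::].

Fixpoint allvars (f : form) : seq nat :=
  match f with
  | FBot | FTop => [::]
  | FAtom R args => atom_vars args
  | FEq x y => [:: x; y]
  | FNeg g => allvars g
  | FAnd g h => allvars g ++ allvars h
  | FEx x g => x :: allvars g
  | FCnt _ x g => x :: allvars g
  end.

Fixpoint cnt_ok (f : form) : Prop :=
  match f with
  | FBot | FTop | FAtom _ _ | FEq _ _ => True
  | FNeg g => cnt_ok g
  | FAnd g h => cnt_ok g /\ cnt_ok h
  | FEx _ g => cnt_ok g
  | FCnt k _ g => 0 < k /\ cnt_ok g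
  end.

Definition FOC2 (f : form) : Prop :=
  (exists a b : nat, {subset allvars f <= [:: a; b]}) /\ cnt_ok f.

Definition upd (D : Type) (e : nat -> D) (x : nat) (d : D) : nat -> D :=
  fun z => if z == x then d else e z.

Fixpoint sat (D : Type) (I : forall R : S, ('I_(ar R) -> D) -> Prop)
  (e : nat -> D) (f : form) : Prop :=
  match f with
  | FBot => False
  | FTop => True
  | FAtom R args => I R (fun i => e (args i))
  | FEq x y => e x = e y
  | FNeg g => ~ sat I e g
  | FAnd g h => sat I e g /\ sat I e h
  | FEx x g => exists d : D, sat I (upd e x d) g
  | FCnt k x g => exists h : 'I_k -> D,
                    injective h /\ forall i, sat I (upd e x (h i)) g
  end.

(* logical equivalence over all tau-structures (an environment e exists only
   for nonempty domains) *)
Definition equiv (f g : form) : Prop :=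
  forall (D : Type) (I : forall R : S, ('I_(ar R) -> D) -> Prop) (e : nat -> D),
    sat I e f <-> sat I e g.

Definition le_logic (L L' : form -> Prop) : Prop :=
  forall f, L f -> sentence f -> exists g, L' g /\ sentence g /\ equiv f g.

Inductive BoolComb (P : form -> Prop) : form -> Prop :=
| bc_base f : P f -> BoolComb P f
| bc_neg f : BoolComb P f -> BoolComb P (FNeg f)
| bc_and f g : BoolComb P f -> BoolComb P g -> BoolComb P (FAnd f g).

Definition uniform_atom (V : seq nat) (a : form) : Prop :=
  exists R (args : 'I_(ar R) -> nat),
    a = FAtom args /\ forall z, (z \in atom_vars args) = (z \in V).

Definition exs (xs : seq nat) (phi : form) : form := foldr FEx phi xs.

Inductive UF1eq : form -> Prop :=
| uf_bot : UF1eq FBot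
| uf_top : UF1eq FTop
| uf_unary R (args : 'I_(ar R) -> nat) :
    (exists x, forall z, z \in atom_vars args <-> z = x) -> UF1eq (FAtom args)
| uf_eq x y : UF1eq (FEq x y)
| uf_neg f : UF1eq f -> UF1eq (FNeg f)
| uf_and f g : UF1eq f -> UF1eq g -> UF1eq (FAnd f g)
| uf_ex (x0 : nat) (xs : seq nat) (U : seq form) (V : seq nat) (F : seq form)
    (phi : form) :
    uniq (x0 :: xs) ->
    (forall u, List.In u U -> UF1eq u /\ {subset fv u <= x0 :: xs}) ->
    {subset V <= x0 :: xs} ->
    (forall a, List.In a F -> uniform_atom V a) ->
    BoolComb (fun g => List.In g U \/ List.In g F) phi ->
    UF1eq (exs xs phi)
| uf_ex0 (x0 : nat) (xs : seq nat) (U : seq form) (V : seq nat) (F : seq form)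
    (phi : form) :
    uniq (x0 :: xs) ->
    (forall u, List.In u U -> UF1eq u /\ {subset fv u <= x0 :: xs}) ->
    {subset V <= x0 :: xs} ->
    (forall a, List.In a F -> uniform_atom V a) ->
    BoolComb (fun g => List.In g U \/ List.In g F) phi ->
    UF1eq (exs (x0 :: xs) phi).

End Syntax.

(* Up to equivalence, a UF_1^= formula is a Boolean combination of
   equalities, atoms and unary facts about single variables.  Under a block of
   existential quantifiers the atoms are uniform, so with arity at most 2 they
   mention at most two variables; every other quantified variable either
   denotes the value of a variable already present or a new element, and
   "at least n new elements of a given unary type" is expressible with a
   counting quantifier.  Eliminating these variables one by one leaves at most
   two quantified variables besides the free one, which two variables and
   counting (to keep witnesses apart from the free variable) can express.

   Conversely, call a binary relation on Z rich if it is irreflexive,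
   asymmetric, and realises every pattern of edges between a given point and
   one new point, or between two new points.  By induction on UF_1^= formulas,
   their truth in a rich structure depends neither on the structure nor on
   the assignment beyond the equalities among the free variables: inside a
   block only two variables occur in atoms, and a
   partial isomorphism on them extends to an injection of Z.  The successor
   relation on Z and its extension by the edge 0 -> 2 are rich, but only the
   latter satisfies the FOC^2 sentence  exists x, exists^{>=2} y, R(x, y). *)

From mathcomp Require Import all_boot.
From Stdlib Require Import FunctionalExtensionality Classical ZArith Lia.
From Stdlib Require List.
Set Implicit Arguments. Unset Strict Implicit. Unset Printing Implicit Defensive.

Lemma InP (T : eqType) (x : T) (s : seq T) : reflect (List.In x s) (x \in s).
Proof.
elim: s => [|a s IH] /=; first by right.
rewrite inE; apply: (iffP orP) => [[/eqP->|/IH]|[->|/IH]]; by [left|right|rewrite eqxx|].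
Qed.

Lemma uniq_NoDup (T : eqType) (s : seq T) : uniq s -> List.NoDup s.
Proof.
elim: s => [|a s IH] /=; first by constructor.
by case/andP=> Ha Hs; constructor; [move/InP; rewrite (negbTE Ha) | exact: IH].
Qed.

Section UF1eqInduction.
Variables (S : Type) (ar : S -> nat) (P : form ar -> Prop).
Hypotheses (Pbot : P (FBot ar)) (Ptop : P (FTop ar)).
Hypothesis Punary : forall R (args : 'I_(ar R) -> nat),
  (exists x, forall z, z \in atom_vars args <-> z = x) -> P (FAtom args).
Hypothesis Peq : forall x y, P (FEq ar x y).
Hypothesis Pneg : forall f, P f -> P (FNeg f).
Hypothesis Pand : forall f g, P f -> P g -> P (FAnd f g).
Hypothesis Pex : forall x0 xs (U : seq (form ar)) V F phi,
  uniq (x0 :: xs) ->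
  (forall u, List.In u U -> P u /\ {subset fv u <= x0 :: xs}) ->
  {subset V <= x0 :: xs} ->
  (forall a, List.In a F -> uniform_atom V a) ->
  BoolComb (fun g => List.In g U \/ List.In g F) phi ->
  P (exs xs phi) /\ P (exs (x0 :: xs) phi).

(* The generated induction principle gives no hypothesis for the nested
   premise on the list [U]. *)
Lemma UF1eq_induction f : UF1eq f -> P f.
Proof.
move: f; fix IH 2 => f [||R args|x y|g Hg|g h Hg Hh|x0 xs U V F phi|x0 xs U V F phi].
- exact: Pbot.
- exact: Ptop.
- exact: Punary.
- exact: Peq.
- exact/Pneg/IH.
- exact: Pand (IH g Hg) (IH h Hh).
all: move=> Hu HU HV HF Hbc.
all: have HU' u (Hin : List.In u U) : P u /\ {subset fv u <= x0 :: xs}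
  by case: (HU u Hin) => Hu' Hfv; split; [exact: IH | exact: Hfv].
- exact: (proj1 (Pex Hu HU' HV HF Hbc)).
- exact: (proj2 (Pex Hu HU' HV HF Hbc)).
Qed.

End UF1eqInduction.

Section Semantics.
Variables (S : Type) (ar : S -> nat).
Implicit Types (f g : form ar).

Lemma in_atom_vars R (args : 'I_(ar R) -> nat) i : args i \in atom_vars args.
Proof. by rewrite /atom_vars map_f // mem_enum. Qed.

Lemma sat_fv D (I : forall R, ('I_(ar R) -> D) -> Prop) f :
  forall e e', {in fv f, e =1 e'} -> (sat I e f <-> sat I e' f).
Proof.
elim: f => [||R args|x y|g IH|g IHg h IHh|x g IH|k x g IH] e e' H /=; try tauto.
- have -> // : (fun i => e (args i)) = (fun i => e' (args i)).
  by apply: functional_extensionality => i; rewrite H ?in_atom_vars.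
- by rewrite (H x) ?(H y) // !inE eqxx ?orbT.
- by rewrite (IH e e').
- by rewrite (IHg e e') ?(IHh e e') // => z Hz; apply: H; rewrite mem_cat Hz ?orbT.
all: have E d : sat I (upd e x d) g <-> sat I (upd e' x d) g
  by apply: IH => z Hz; rewrite /upd; case: eqP => // /eqP zx; rewrite H // mem_filter zx.
- by split=> -[d Hd]; exists d; apply/E.
- by split=> -[hh [Hi Hd]]; exists hh; split=> // i; apply/E.
Qed.

Lemma fv_sub_allvars f : {subset fv f <= allvars f}.
Proof.
elim: f => [||R args|x y|g IH|g IHg h IHh|x g IH|k x g IH] z //=.
- exact: IH.
- by rewrite !mem_cat => /orP[/IHg->|/IHh->]; rewrite ?orbT.
all: by rewrite mem_filter inE => /andP[_ /IH ->]; rewrite orbT.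
Qed.

Lemma exs_sat D (I : forall R, ('I_(ar R) -> D) -> Prop) xs phi e :
  sat I e (exs xs phi) <->
  exists e', (forall z, z \notin xs -> e' z = e z) /\ sat I e' phi.
Proof.
elim: xs e => [|x xs IH] e /=.
  split=> [|[e' [He Hs]]]; first by exists e.
  by rewrite (sat_fv I (e' := e')) // => z _; rewrite He.
split.
- move=> [d /IH [e' [He Hs]]]; exists e'; split=> // z; rewrite inE negb_or => /andP[zx zxs].
  by rewrite He // /upd (negbTE zx).
- move=> [e' [He Hs]]; exists (e' x); apply/IH; exists e'; split=> // z zxs.
  rewrite /upd; case: eqP => [->//|/eqP zx]; apply: He; by rewrite inE negb_or zx.
Qed.

Lemma BoolComb_sat_iff (P : form ar -> Prop) phi (Hphi : BoolComb P phi) D1 D2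
    (I1 : forall R, ('I_(ar R) -> D1) -> Prop) (I2 : forall R, ('I_(ar R) -> D2) -> Prop) e1 e2 :
  (forall g, P g -> (sat I1 e1 g <-> sat I2 e2 g)) -> (sat I1 e1 phi <-> sat I2 e2 phi).
Proof.
move=> HP; elim: Hphi => [g /HP //|g _ IH|g h _ IHg _ IHh] /=; [tauto | by rewrite IHg IHh].
Qed.

Definition FOr f g : form ar := FNeg (FAnd (FNeg f) (FNeg g)).
Definition FOrs (s : list (form ar)) : form ar := List.fold_right FOr (FBot ar) s.

Lemma FOr_sat D (I : forall R, ('I_(ar R) -> D) -> Prop) e f g :
  sat I e (FOr f g) <-> sat I e f \/ sat I e g.
Proof.
rewrite /=; split=> [H|[H|H] [N1 N2]]; [|exact: N1 H|exact: N2 H].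
by apply: NNPP => N; apply: H; split=> ?; apply: N; [left|right].
Qed.

Lemma FOrs_sat D (I : forall R, ('I_(ar R) -> D) -> Prop) e s :
  sat I e (FOrs s) <-> exists f, List.In f s /\ sat I e f.
Proof.
elim: s => [|a s IH]; first by split=> [[]|[? [[]]]].
rewrite [FOrs _]/= FOr_sat IH; split=> [[Ha|[b [Hb Hs]]]|[b [[<-|Hb] Hs]]]; try tauto.
- by exists a; split; [left|].
- by exists b; split; [right|].
- by right; exists b.
Qed.

Lemma upd_comm D (e : nat -> D) y1 y2 d1 d2 : y1 != y2 ->
  upd (upd e y1 d1) y2 d2 =1 upd (upd e y2 d2) y1 d1.
Proof.
move=> n12 z; rewrite /upd; case: (z =P y2) => [->|_] //.
by rewrite eq_sym (negbTE n12).
Qed.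

Hypothesis ar_le2 : forall R : S, ar R <= 2.

Lemma uniform_atoms_two_vars x0 (xs : seq nat) V (F : seq (form ar)) :
  {subset V <= x0 :: xs} -> (forall a, List.In a F -> uniform_atom V a) ->
  exists w1 w2, [/\ w1 \in x0 :: xs, w2 \in x0 :: xs &
   forall a, List.In a F -> exists R (args : 'I_(ar R) -> nat),
      a = FAtom args /\ forall i, args i = w1 \/ args i = w2].
Proof.
move=> HV HF; case: F HF => [|a0 F] HF.
  by exists x0, x0; rewrite inE eqxx; split=> // a [].
have [R0 [args0 [_ Hu0]]] := HF a0 (or_introl erefl).
set s := atom_vars args0.
have ss : size s <= 2 by rewrite /s /atom_vars size_map size_enum_ord ar_le2.
have ins k : nth x0 s k \in x0 :: xs.
  case: (ltnP k (size s)) => hk; last by rewrite nth_default // inE eqxx.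
  by apply: HV; rewrite -Hu0 mem_nth.
exists (nth x0 s 0), (nth x0 s 1); split; [exact: ins | exact: ins |].
move=> a Ha; have [R [args [-> Hu]]] := HF a Ha; exists R, args; split=> // i.
have Hi : args i \in s by rewrite /s Hu0 -Hu in_atom_vars.
rewrite -(nth_index x0 Hi).
have := index_mem (args i) s; rewrite Hi => /leq_trans/(_ ss).
by case: (index (args i) s) => [|[|k]] //; [left|right].
Qed.

End Semantics.

(** * Two-variable formulas and unary facts *)

Section TwoVariableForms.
Variables (S : Type) (ar : S -> nat).
Notation form := (form ar).
Implicit Types (g h : form) (b : bool).

Definition FOC2_01 g : Prop := {subset allvars g <= [:: 0; 1]} /\ cnt_ok g.

Lemma FOC2_01_FOC2 g : FOC2_01 g -> FOC2 g.
Proof. by case=> Hg Hc; split=> //; exists 0, 1. Qed.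

Lemma FOC2_01_bit (b : bool) : (b : nat) \in [:: 0; 1].
Proof. by case: b. Qed.

Lemma FOC2_01_eq b1 b2 : FOC2_01 (FEq ar b1 b2).
Proof.
by split=> // z /=; rewrite !inE => /orP[]/eqP->; [case: b1 | case: b2].
Qed.

Lemma FOC2_01_neg g : FOC2_01 g -> FOC2_01 (FNeg g).
Proof. by []. Qed.

Lemma FOC2_01_and g h : FOC2_01 g -> FOC2_01 h -> FOC2_01 (FAnd g h).
Proof. by move=> [Hg Cg] [Hh Ch]; split=> //= z; rewrite mem_cat => /orP[/Hg|/Hh]. Qed.

Lemma FOC2_01_ex x g : x \in [:: 0; 1] -> FOC2_01 g -> FOC2_01 (FEx x g).
Proof. by move=> Hx [Hg Cg]; split=> //= z; rewrite inE => /orP[/eqP->|/Hg]. Qed.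

Lemma FOC2_01_cnt k x g : 0 < k -> x \in [:: 0; 1] -> FOC2_01 g -> FOC2_01 (FCnt k x g).
Proof. by move=> Hk Hx [Hg Cg]; split=> //= z; rewrite inE => /orP[/eqP->|/Hg]. Qed.

Lemma FOC2_01_ors s : (forall g, List.In g s -> FOC2_01 g) -> FOC2_01 (FOrs s).
Proof.
elim: s => [|g s IH] /= Hs; first by split.
by apply/FOC2_01_neg/FOC2_01_and; apply: FOC2_01_neg;
  [apply: Hs; left | apply: IH => h Hh; apply: Hs; right].
Qed.

Lemma FOC2_01_sat D (I : forall R, ('I_(ar R) -> D) -> Prop) g (e e' : nat -> D) :
  FOC2_01 g -> e 0 = e' 0 -> e 1 = e' 1 -> (sat I e g <-> sat I e' g).
Proof.
move=> [Hg _] H0 H1; apply: sat_fv => z /fv_sub_allvars /Hg.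
by rewrite !inE => /orP[/eqP->|/eqP->].
Qed.

(* A formula of [FOC2_01] read with both variables denoting the same element
   is a unary property; [at_var b g] asserts it of the element denoted by
   variable [b]. *)
Definition at_var b g : form := FEx (~~ b) (FAnd (FEq ar (~~ b) b) g).

Lemma FOC2_01_at_var b g : FOC2_01 g -> FOC2_01 (at_var b g).
Proof.
by move=> Hg; apply/FOC2_01_ex/FOC2_01_and/Hg; [apply: FOC2_01_bit | apply: FOC2_01_eq].
Qed.

Lemma at_var_sat D (I : forall R, ('I_(ar R) -> D) -> Prop) b g (e : nat -> D) :
  FOC2_01 g -> (sat I e (at_var b g) <-> sat I (fun _ => e b) g).
Proof.
move=> Hg; have Hupd : sat I (upd e (~~ b) (e b)) g <-> sat I (fun _ => e b) g.
  by apply: FOC2_01_sat; rewrite /upd; case: b.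
have Hb (d : D) : upd e (~~ b) d b = e b by rewrite /upd; case: (b).
split=> [[d [Ed Hs]]|Hs].
  have {}Ed : d = e b by rewrite -(Hb d) -Ed /upd eqxx.
  by subst d; apply/Hupd.
by exists (e b); split; [rewrite /= Hb /upd eqxx | apply/Hupd].
Qed.

Lemma fv_at_var b g : FOC2_01 g -> {subset fv (at_var b g) <= [:: (b : nat)]}.
Proof.
move=> [Hg _] z; case: b => /=;
  rewrite inE mem_filter => /orP[/eqP->|/andP[nz /fv_sub_allvars/Hg]];
  by rewrite ?mem_head // !inE (negbTE nz) ?orbF.
Qed.

End TwoVariableForms.

(* Only [at_var_sat] and [fv_at_var] should see through [at_var]. *)
Opaque at_var.

Section BoolForms.
Variables (S : Type) (ar : S -> nat).
Notation form := (form ar).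

Inductive bform : Type :=
| BTop | BBot | BEq (x y : nat) | BUnary (g : form) (x : nat) | BSome (g : form)
| BAtom (R : S) (args : 'I_(ar R) -> nat) | BNeg (l : bform) | BAnd (l1 l2 : bform).

Fixpoint bsat D (I : forall R : S, ('I_(ar R) -> D) -> Prop) (e : nat -> D) (l : bform) : Prop :=
  match l with
  | BTop => True
  | BBot => False
  | BEq x y => e x = e y
  | BUnary g x => sat I (fun _ => e x) g
  | BSome g => exists d, sat I (fun _ => d) g
  | BAtom R args => I R (fun i => e (args i))
  | BNeg l => ~ bsat I e l
  | BAnd l1 l2 => bsat I e l1 /\ bsat I e l2
  end.

Fixpoint bvars (l : bform) : seq nat :=
  match l with
  | BEq x y => [:: x; y]
  | BUnary _ x => [:: x]
  | BAtom _ args => atom_vars args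
  | BNeg l => bvars l
  | BAnd l1 l2 => bvars l1 ++ bvars l2
  | _ => [::]
  end.

Fixpoint batom_vars (l : bform) : seq nat :=
  match l with
  | BAtom _ args => atom_vars args
  | BNeg l => batom_vars l
  | BAnd l1 l2 => batom_vars l1 ++ batom_vars l2
  | _ => [::]
  end.

Fixpoint bwf (l : bform) : Prop :=
  match l with
  | BUnary g _ | BSome g => FOC2_01 g
  | BNeg l => bwf l
  | BAnd l1 l2 => bwf l1 /\ bwf l2
  | _ => True
  end.

Lemma bsat_ext D (I : forall R : S, ('I_(ar R) -> D) -> Prop) (l : bform) (e e' : nat -> D) :
  {in bvars l, e =1 e'} -> (bsat I e l <-> bsat I e' l).
Proof.
elim: l e e' => [||x y|g x|g|R args|l IH|l1 IH1 l2 IH2] e e' H /=; try tauto.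
- by rewrite (H x) ?(H y) // !inE eqxx ?orbT.
- by rewrite (H x) // inE.
- have -> // : (fun i => e (args i)) = (fun i => e' (args i)).
  by apply: functional_extensionality => i; rewrite H // in_atom_vars.
- by rewrite (IH e e').
- by rewrite (IH1 e e') ?(IH2 e e') // => z Hz; apply: H; rewrite mem_cat Hz ?orbT.
Qed.

Definition BOr (l1 l2 : bform) : bform := BNeg (BAnd (BNeg l1) (BNeg l2)).
Definition BOrs (s : list bform) : bform := List.fold_right BOr BBot s.

Lemma BOr_sat D (I : forall R : S, ('I_(ar R) -> D) -> Prop) e l1 l2 :
  bsat I e (BOr l1 l2) <-> bsat I e l1 \/ bsat I e l2.
Proof.
rewrite /=; split=> [H|[H|H] [N1 N2]]; [|exact: N1 H|exact: N2 H].
by apply: NNPP => N; apply: H; split=> ?; apply: N; [left|right].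
Qed.

Lemma BOrs_sat D (I : forall R : S, ('I_(ar R) -> D) -> Prop) e s :
  bsat I e (BOrs s) <-> exists l, List.In l s /\ bsat I e l.
Proof.
elim: s => [|a s IH]; first by split=> [[]|[? [[]]]].
rewrite [BOrs _]/= BOr_sat IH; split=> [[Ha|[b [Hb Hs]]]|[b [[<-|Hb] Hs]]]; try tauto.
- by exists a; split; [left|].
- by exists b; split; [right|].
- by right; exists b.
Qed.

Lemma mem_flatten_map (T : Type) (f : T -> seq nat) (s : list T) z :
  z \in flatten (map f s) -> exists a, List.In a s /\ z \in f a.
Proof.
elim: s => //= a s IH; rewrite mem_cat => /orP[Hz|/IH [b [Hb Hz]]].
  by exists a; split; [left|].
by exists b; split; [right|].
Qed.

Lemma bvars_BOrs s : bvars (BOrs s) = flatten (map bvars s).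
Proof. by elim: s => //= a s ->. Qed.

Lemma batom_vars_BOrs s : batom_vars (BOrs s) = flatten (map batom_vars s).
Proof. by elim: s => //= a s ->. Qed.

Lemma bwf_BOrs s : (forall l, List.In l s -> bwf l) -> bwf (BOrs s).
Proof. by elim: s => //= a s IH H; split; [apply: H; left | apply: IH => b Hb; apply: H; right]. Qed.

Fixpoint brename (sigma : nat -> nat) (l : bform) : bform :=
  match l with
  | BEq x y => BEq (sigma x) (sigma y)
  | BUnary g x => BUnary g (sigma x)
  | BAtom R args => BAtom (fun i => sigma (args i))
  | BNeg l => BNeg (brename sigma l)
  | BAnd l1 l2 => BAnd (brename sigma l1) (brename sigma l2)
  | l => l
  end.

Lemma brename_sat D (I : forall R : S, ('I_(ar R) -> D) -> Prop) sigma l (e : nat -> D) :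
  bsat I e (brename sigma l) <-> bsat I (e \o sigma) l.
Proof. by elim: l => //= [l IH|l1 IH1 l2 IH2]; rewrite ?IH ?IH1 ?IH2. Qed.

Lemma bvars_brename sigma l : bvars (brename sigma l) = map sigma (bvars l).
Proof. by elim: l => //= [R args|l1 -> l2 ->]; rewrite ?map_cat // /atom_vars -map_comp. Qed.

Lemma batom_vars_brename sigma l : batom_vars (brename sigma l) = map sigma (batom_vars l).
Proof. by elim: l => //= [R args|l1 -> l2 ->]; rewrite ?map_cat // /atom_vars -map_comp. Qed.

Lemma bwf_brename sigma l : bwf (brename sigma l) = bwf l.
Proof. by elim: l => //= [l1 -> l2 ->]. Qed.

Definition subst_var (y z v : nat) : nat := if v == y then z else v.

Lemma bsubst_sat D (I : forall R : S, ('I_(ar R) -> D) -> Prop) y z l (e : nat -> D) :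
  bsat I e (brename (subst_var y z) l) <-> bsat I (upd e y (e z)) l.
Proof.
by rewrite brename_sat; apply: bsat_ext => v _; rewrite /subst_var /upd /=; case: (v == y).
Qed.

(* Variable [z] is sent to variable [1] if [m z] and to [0] otherwise. *)
Fixpoint to_FOC2 (m : nat -> bool) (l : bform) : form :=
  match l with
  | BTop => FTop ar
  | BBot => FBot ar
  | BEq x y => FEq ar (m x) (m y)
  | BUnary g x => at_var (m x) g
  | BSome g => FEx 0 (at_var false g)
  | BAtom R args => FAtom (fun i => nat_of_bool (m (args i)))
  | BNeg l => FNeg (to_FOC2 m l)
  | BAnd l1 l2 => FAnd (to_FOC2 m l1) (to_FOC2 m l2)
  end.

Lemma to_FOC2_sat D (I : forall R : S, ('I_(ar R) -> D) -> Prop) (m : nat -> bool) l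
    (e E : nat -> D) :
  bwf l -> {in bvars l, forall z, E (m z) = e z} ->
  (bsat I e l <-> sat I E (to_FOC2 m l)).
Proof.
elim: l e E => [||x y|g x|g|R args|l IH|l1 IH1 l2 IH2] e E Hw H; rewrite [to_FOC2 _ _]/=.
- by [].
- by [].
- by rewrite /= -(H x) ?(H y) // !inE eqxx ?orbT.
- by rewrite at_var_sat // H ?mem_head.
- by split=> -[d Hd]; exists d; [apply/(at_var_sat I _ _ Hw) | move/(at_var_sat I _ _ Hw): Hd].
- rewrite /=; have -> // : (fun i => E (m (args i))) = (fun i => e (args i)).
  by apply: functional_extensionality => i; rewrite H // in_atom_vars.
- by rewrite /= (IH e E).
- case: Hw => Hw1 Hw2.
  by rewrite /= (IH1 e E) ?(IH2 e E) // => z Hz; apply: H; rewrite mem_cat Hz ?orbT.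
Qed.

Lemma FOC2_01_to_FOC2 (m : nat -> bool) l : bwf l -> FOC2_01 (to_FOC2 m l).
Proof.
elim: l => [||x y|g x|g|R args|l IH|l1 IH1 l2 IH2] /= Hw.
- by split.
- by split.
- exact: FOC2_01_eq.
- exact: FOC2_01_at_var.
- exact/FOC2_01_ex/FOC2_01_at_var.
- by split=> // z /mapP [i _ ->]; rewrite FOC2_01_bit.
- exact/FOC2_01_neg/IH.
- by case: Hw => Hw1 Hw2; apply: FOC2_01_and; [apply: IH1 | apply: IH2].
Qed.

Lemma fv_to_FOC2 (m : nat -> bool) l :
  bwf l -> {subset fv (to_FOC2 m l) <= [seq nat_of_bool (m z) | z <- bvars l]}.
Proof.
elim: l => [||x y|g x|g|R args|l IH|l1 IH1 l2 IH2] Hw z; rewrite [to_FOC2 _ _]/=.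
- by [].
- by [].
- by rewrite /= !inE.
- exact: fv_at_var.
- by rewrite mem_filter => /andP[nz0 /(fv_at_var (Hw : FOC2_01 g))]; rewrite inE (negbTE nz0).
- by rewrite /= /atom_vars -map_comp.
- exact: IH.
- case: Hw => Hw1 Hw2; rewrite /= map_cat !mem_cat.
  by case/orP=> [/IH1->|/IH2->]; rewrite ?orbT.
Qed.

End BoolForms.

(** * Eliminating quantified variables *)

Section AtLeast.
Variable D : Type.
Implicit Types (P Q : D -> Prop) (l : list D).

Definition atleast P n : Prop :=
  exists l, [/\ List.length l = n, List.NoDup l & forall x, List.In x l -> P x].

Lemma atleast_ext P Q n : (forall x, P x <-> Q x) -> (atleast P n <-> atleast Q n).
Proof. by move=> PQ; split=> -[l [Hl Hn HP]]; exists l; split=> // x /HP /PQ. Qed.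

Lemma atleast_S P a n : P a -> (atleast (fun x => P x /\ x <> a) n <-> atleast P n.+1).
Proof.
move=> Pa; split=> [[l [Hl Hn HP]]|[l [Hl Hn HP]]].
  exists (a :: l); split; [by rewrite /= Hl | constructor=> // /HP [] // |].
  by move=> x /= [<- //|/HP []].
have [la|nla] := classic (List.In a l).
  have [l1 [l2 El]] := List.in_split _ _ la; subst l.
  exists (l1 ++ l2); split.
  - by move: Hl; rewrite !List.length_app /=; lia.
  - exact: List.NoDup_remove_1 Hn.
  - move=> x Hx; split.
      by apply: HP; apply/List.in_app_iff; case/List.in_app_iff: Hx; [left | right; right].
    by move=> Ex; apply: (List.NoDup_remove_2 _ _ _ Hn); rewrite -Ex.
case: l Hl Hn HP nla => // x l [Hl] Hn HP nla.
have [_ Hn'] := proj1 (List.NoDup_cons_iff x l) Hn.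
exists l; split=> // y Hy; split; first by apply: HP; right.
by move=> Ey; apply: nla; right; rewrite -Ey.
Qed.

Lemma atleast_injective P n :
  (exists h : 'I_n -> D, injective h /\ forall i, P (h i)) <-> atleast P n.
Proof.
split=> [[h [hi hP]]|[l [Hl Hn HP]]].
  exists (List.map h (enum 'I_n)); split.
  - rewrite List.length_map -[n in _ = n]size_enum_ord.
    by elim: (enum _) => //= ? ? ->.
  - by apply/List.NoDup_map_NoDup_ForallPairs/uniq_NoDup/enum_uniq => i j _ _ /hi.
  - by move=> x /List.in_map_iff [i [<- _]].
case: l Hl Hn HP => [|d l] Hl Hn HP.
  by rewrite -Hl; exists (fun i : 'I_0 => False_rect D (notF (ltn_ord i))); split; case.
exists (fun i : 'I_n => List.nth i (d :: l) d); split.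
- move=> i j /(proj1 (List.NoDup_nth (d :: l) d) Hn); rewrite Hl => H.
  by apply: val_inj; apply: H; apply/ltP.
- by move=> i; apply: HP; apply: List.nth_In; rewrite Hl; apply/ltP.
Qed.

Lemma two_injective P :
  (exists h : 'I_2 -> D, injective h /\ forall i, P (h i)) <->
  exists q1 q2, [/\ q1 <> q2, P q1 & P q2].
Proof.
split=> [[h [hi hP]]|[q1 [q2 [nq Hq1 Hq2]]]].
  by exists (h ord0), (h ord_max); split=> // /hi.
exists (fun i : 'I_2 => if i == ord0 then q1 else q2); split.
  move=> [[|[|i]] Hi] [[|[|j]] Hj] //= E;
  by [apply: val_inj | case: nq | case: nq; rewrite E].
by move=> [[|[|i]] Hi].
Qed.

Lemma exists_avoid P a :
  (exists q, q <> a /\ P q) <->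
  (P a /\ exists q1 q2, [/\ q1 <> q2, P q1 & P q2]) \/ (~ P a /\ exists q, P q).
Proof.
split=> [[q [nqa Pq]]|[[Pa [q1 [q2 [nq P1 P2]]]]|[nPa [q Pq]]]].
- have [Pa|nPa] := classic (P a); [left | right]; split=> //.
    by exists q, a.
  by exists q.
- have [E1|n1] := classic (q1 = a); last by exists q1.
  by exists q2; split=> // E2; apply: nq; rewrite E1 E2.
- by exists q; split=> // E; apply: nPa; rewrite -E.
Qed.

End AtLeast.

Section VariableElimination.
Variables (S : Type) (ar : S -> nat).
Notation form := (form ar).
Notation bform := (bform ar).
Implicit Types (l : bform) (R : seq nat).

Fixpoint bnot_among r R : bform :=
  if R is r' :: R' then BAnd (BNeg (BEq ar r r')) (bnot_among r R') else BTop ar.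

Lemma bnot_among_sat D (I : forall R : S, ('I_(ar R) -> D) -> Prop) r R (e : nat -> D) :
  bsat I e (bnot_among r R) <-> forall z, z \in R -> e r <> e z.
Proof.
elim: R => [|r' R IH] /=; first by split.
rewrite IH; split=> [[H1 H2] z|H]; first by rewrite inE => /orP[/eqP->|/H2].
by split=> [|z Hz]; apply: H; rewrite inE ?eqxx ?Hz ?orbT.
Qed.

Lemma bvars_bnot_among r R : {subset bvars (bnot_among r R) <= r :: R}.
Proof.
elim: R => [|r' R IH] //= z; rewrite !inE => /orP[->//|/orP[->|/IH]]; rewrite ?orbT //.
by rewrite inE => /orP[->|->]; rewrite ?orbT.
Qed.

Lemma batom_vars_bnot_among r R : batom_vars (bnot_among r R) = [::].
Proof. by elim: R => //= r' R ->. Qed.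

Lemma bwf_bnot_among r R : bwf (bnot_among r R).
Proof. by elim: R. Qed.

Definition fresh_count D (I : forall R : S, ('I_(ar R) -> D) -> Prop) (th : form) n R
    (e : nat -> D) : Prop :=
  atleast (fun d => sat I (fun _ => d) th /\ forall z, z \in R -> d <> e z) n.

(* At least [n] elements satisfy [th] outside the values of [R]: scanning
   [R], each variable whose value is a new witness raises the count by one. *)
Fixpoint bfresh (th : form) n R : bform :=
  match R with
  | [::] => if n is 0 then BTop ar else BSome (FCnt n 0 (at_var false th))
  | r :: R' =>
      let new_r := BAnd (BUnary th r) (bnot_among r R') in
      BOr (BAnd new_r (bfresh th n.+1 R')) (BAnd (BNeg new_r) (bfresh th n R'))
  end.

Lemma bfresh_sat D (I : forall R : S, ('I_(ar R) -> D) -> Prop) th R :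
  FOC2_01 th -> forall n (e : nat -> D), bsat I e (bfresh th n R) <-> fresh_count I th n R e.
Proof.
move=> Hth; elim: R => [|r R IH] n e.
  case: n => [|n] /=; first by split=> // _; exists [::]; split=> //; constructor.
  have Hnil d : (sat I (fun _ => d) th /\ forall z, z \in [::] -> d <> e z) <-> sat I (fun _ => d) th.
    by split=> [[]|].
  rewrite /fresh_count (atleast_ext _ Hnil) -atleast_injective.
  split=> [[d [h [hi Hh]]]|[h [hi Hh]]]; [exists h | exists (e 0), h]; split=> // i.
    by move/(at_var_sat I false _ Hth): (Hh i).
  by apply/(at_var_sat I false _ Hth); apply: Hh.
rewrite [bfresh _ _ _]/= BOr_sat /= bnot_among_sat !IH /fresh_count.
pose P d := sat I (fun _ => d) th /\ forall z, z \in R -> d <> e z.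
have Hcons d : (sat I (fun _ => d) th /\ forall z, z \in r :: R -> d <> e z) <-> P d /\ d <> e r.
  split=> [[Hd Hz]|[[Hd Hz] Hr]].
    by split; [split=> // z Hz'|]; apply: Hz; rewrite inE ?Hz' ?eqxx ?orbT.
  by split=> // z; rewrite inE => /orP[/eqP->|/Hz].
rewrite (atleast_ext _ Hcons) -/(P (e r)) -/(atleast P _).
have [HC|HC] := classic (P (e r)).
  by rewrite (atleast_S _ HC); tauto.
suff -> : atleast (fun d => P d /\ d <> e r) n <-> atleast P n by tauto.
by apply: atleast_ext => d; split=> [[]|Hd] //; split=> // Edr; apply: HC; rewrite -Edr.
Qed.

Lemma bvars_bfresh th n R : {subset bvars (bfresh th n R) <= R}.
Proof.
elim: R n => [|r R IH] n z; first by case: n.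
rewrite /= !(inE, mem_cat) -!orbA => /or4P[->//|/bvars_bnot_among//|/IH->|];
  first by rewrite orbT.
by case/or3P=> [->//|/bvars_bnot_among//|/IH->]; rewrite orbT.
Qed.

Lemma batom_vars_bfresh th n R : batom_vars (bfresh th n R) = [::].
Proof. by elim: R n => [|r R IH] [|n] //=; rewrite ?batom_vars_bnot_among ?IH. Qed.

Lemma bwf_bfresh th n R : FOC2_01 th -> bwf (bfresh th n R).
Proof.
move=> Hth; elim: R n => [|r R IH] n /=.
  by case: n => // n; apply: FOC2_01_cnt => //; apply: FOC2_01_at_var.
by have Hr := conj Hth (bwf_bnot_among r R); split; split.
Qed.

End VariableElimination.

Section Cases.
Variables (S : Type) (ar : S -> nat).
Notation form := (form ar).
Notation bform := (bform ar).
Implicit Types (l : bform).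

(* Case split on the unary facts about [y]: each case is a unary condition on
   [y] paired with what [l] becomes under it, provided the value of [y]
   differs from those of the other variables. *)
Fixpoint bcases (y : nat) (l : bform) : list (form * bform) :=
  match l with
  | BUnary g x => if x == y then [:: (g, BTop ar); (FNeg g, BBot ar)] else [:: (FTop ar, l)]
  | BEq a b => if (a == y) && (b == y) then [:: (FTop ar, BTop ar)]
               else if (a == y) || (b == y) then [:: (FTop ar, BBot ar)]
               else [:: (FTop ar, l)]
  | BNeg l' => List.map (fun p => (p.1, BNeg p.2)) (bcases y l')
  | BAnd l1 l2 => List.flat_map (fun p =>
                    List.map (fun q => (FAnd p.1 q.1, BAnd p.2 q.2)) (bcases y l2)) (bcases y l1)
  | _ => [:: (FTop ar, l)]
  end.

Lemma bcases_cover D (I : forall R : S, ('I_(ar R) -> D) -> Prop) y l (d : D) :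
  exists p, List.In p (bcases y l) /\ sat I (fun _ => d) p.1.
Proof.
elim: l => [||a b|g x|g|R args|l [p [Hp Hs]]|l1 [p [Hp Hs]] l2 [q [Hq Hsq]]] /=;
  try by eexists; split; [left; reflexivity|].
- case: (_ && _); first by eexists; split; [left; reflexivity|].
  by case: (_ || _); eexists; (split; [left; reflexivity|]).
- case: (x == y); last by eexists; split; [left; reflexivity|].
  have [Hg|Hg] := classic (sat I (fun _ => d) g).
    by exists (g, BTop ar); split; [left|].
  by exists (FNeg g, BBot ar); split; [right; left|].
- by exists (p.1, BNeg p.2); split=> //; apply/List.in_map_iff; exists p.
- exists (FAnd p.1 q.1, BAnd p.2 q.2); split=> //.
  by apply/List.in_flat_map; exists p; split=> //; apply/List.in_map_iff; exists q.
Qed.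

Lemma bcases_sat D (I : forall R : S, ('I_(ar R) -> D) -> Prop) y l (e : nat -> D) :
  (forall z, z \in bvars l -> z != y -> e y <> e z) ->
  forall p, List.In p (bcases y l) -> sat I (fun _ => e y) p.1 -> (bsat I e l <-> bsat I e p.2).
Proof.
elim: l => [||a b|g x|g|R args|l IH|l1 IH1 l2 IH2] /= Hv p; try by move=> [<-|[]].
- case: ifP => [/andP[/eqP-> /eqP->] [<-|[]] //|nab].
  case: ifP => [ab [<-|[]] _ /=|_ [<-|[]] //]; split=> // Eab.
  case/orP: ab => /eqP E; subst y; move: nab; rewrite eqxx ?andbT => /negbT nab.
    by apply: (Hv b); rewrite // !inE eqxx orbT.
  by apply: (Hv a); rewrite ?inE ?eqxx // eq_sym.
- by case: ifP => [/eqP-> [<-|[<-|[]]]|_ [<-|[]]] //=.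
- move=> /List.in_map_iff [q [<- Hq]] /= Hs; by rewrite (IH Hv q Hq Hs).
- move=> /List.in_flat_map [q [Hq /List.in_map_iff [q' [<- Hq']]]] /= [Hs1 Hs2].
  rewrite (IH1 _ q Hq Hs1) ?(IH2 _ q' Hq' Hs2) // => z Hz; apply: Hv; by rewrite mem_cat Hz ?orbT.
Qed.

Lemma bcases_props y l : bwf l -> y \notin batom_vars l -> forall p, List.In p (bcases y l) ->
  [/\ FOC2_01 p.1, bwf p.2, {subset bvars p.2 <= [seq z <- bvars l | z != y]} &
      {subset batom_vars p.2 <= batom_vars l}].
Proof.
elim: l => [||a b|g x|g|R args|l IH|l1 IH1 l2 IH2] /= Hw ny p.
- by move=> [<-|[]].
- by move=> [<-|[]].
- case: ifP => [_ [<-|[]] //|/negbT nab].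
  case: ifP => [_ [<-|[]] //|/negbT]; rewrite negb_or => /andP[na nb] [<-|[]].
  by split=> // z; rewrite /= na nb.
- case: ifP => [_ [<-|[<-|[]]] //|/negbT nx [<-|[]]].
  by split=> // z; rewrite /= nx.
- by move=> [<-|[]].
- move=> [<-|[]]; split=> // z Hz; rewrite mem_filter Hz andbT.
  by apply: contraNneq ny => <-.
- move=> /List.in_map_iff [q [<- Hq]]; have [? ? ? ?] := IH Hw ny q Hq; by split.
- case: Hw => Hw1 Hw2; move: ny; rewrite mem_cat negb_or => /andP[ny1 ny2].
  move=> /List.in_flat_map [q [Hq /List.in_map_iff [q' [<- Hq']]]] /=.
  have [C1 W1 V1 A1] := IH1 Hw1 ny1 q Hq; have [C2 W2 V2 A2] := IH2 Hw2 ny2 q' Hq'.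
  split; [exact: FOC2_01_and | by [] | |].
  + by move=> z; rewrite filter_cat !mem_cat => /orP[/V1|/V2] ->; rewrite ?orbT.
  + by move=> z; rewrite !mem_cat => /orP[/A1|/A2] ->; rewrite ?orbT.
Qed.

End Cases.

Section Elimination.
Variables (S : Type) (ar : S -> nat).
Notation bform := (bform ar).
Implicit Types (l : bform).

(* [exists y, l] for a variable [y] not occurring in atoms: either [y]
   denotes the value of another variable of [l], or it denotes a new element,
   whose unary type is then fixed by one of the cases of [bcases]. *)
Definition elim_var y l : bform :=
  let R := [seq z <- bvars l | z != y] in
  BOrs (List.app (List.map (fun z => brename (subst_var y z) l) R)
                 (List.map (fun p => BAnd p.2 (bfresh p.1 1 R)) (bcases y l))).

Lemma elim_var_sat D (I : forall R : S, ('I_(ar R) -> D) -> Prop) y l (e : nat -> D) :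
  bwf l -> y \notin batom_vars l ->
  (bsat I e (elim_var y l) <-> exists d, bsat I (upd e y d) l).
Proof.
move=> Hw ny; rewrite /elim_var BOrs_sat; set R := [seq z <- bvars l | z != y].
have drop_y p d : List.In p (bcases y l) -> (bsat I (upd e y d) p.2 <-> bsat I e p.2).
  move=> Hp; have [_ _ V _] := bcases_props Hw ny Hp.
  apply: bsat_ext => z /V; rewrite mem_filter /upd => /andP[/negbTE -> _] //.
have new_y d : (forall z, z \in R -> d <> e z) ->
    forall z, z \in bvars l -> z != y -> upd e y d y <> upd e y d z.
  by move=> Hd z Hz nzy; rewrite /upd eqxx (negbTE nzy); apply: Hd; rewrite mem_filter nzy.
split.
- move=> [a [/List.in_app_iff [/List.in_map_iff [z [<- _]]|/List.in_map_iff [p [<- Hp]]] Ha]].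
    by exists (e z); apply/bsubst_sat.
  have [Hp1 _ _ _] := bcases_props Hw ny Hp.
  case: Ha => Hl /(bfresh_sat I _ Hp1).
  move=> [[|d [|? ?]] [//= _ _ /(_ d (or_introl erefl)) [Hd HdR]]]; exists d.
  have Hs : sat I (fun _ => upd e y d y) p.1 by rewrite /upd eqxx.
  exact/(bcases_sat (new_y d HdR) Hp Hs)/(drop_y p d Hp).
- move=> [d Hd]; have [[z [Hz Edz]]|Hnew] := classic (exists z, z \in R /\ d = e z).
    exists (brename (subst_var y z) l); split; last by apply/bsubst_sat; rewrite -Edz.
    by apply/List.in_app_iff; left; apply/List.in_map_iff; exists z; split=> //; apply/InP.
  have {}Hnew z : z \in R -> d <> e z by move=> Hz Ed; apply: Hnew; exists z.
  have [p [Hp Hs]] := bcases_cover I y l d.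
  exists (BAnd p.2 (bfresh p.1 1 R)); split.
    by apply/List.in_app_iff; right; apply/List.in_map_iff; exists p.
  have Hs' : sat I (fun _ => upd e y d y) p.1 by rewrite /upd eqxx.
  split; first exact/(drop_y p d Hp)/(bcases_sat (new_y d Hnew) Hp Hs').
  have [Hp1 _ _ _] := bcases_props Hw ny Hp.
  apply/(bfresh_sat I _ Hp1).
  exists [:: d]; split=> //; first by constructor; [|constructor].
  by move=> x [<-|[]]; split.
Qed.

Lemma elim_var_props y l : bwf l -> y \notin batom_vars l ->
  [/\ bwf (elim_var y l), {subset bvars (elim_var y l) <= [seq z <- bvars l | z != y]}
    & {subset batom_vars (elim_var y l) <= batom_vars l}].
Proof.
move=> Hw ny; rewrite /elim_var; set R := [seq z <- bvars l | z != y].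
split.
- apply: bwf_BOrs => a /List.in_app_iff [/List.in_map_iff [z [<- _]]|/List.in_map_iff [p [<- Hp]]].
    by rewrite bwf_brename.
  have [Hp1 Hp2 _ _] := bcases_props Hw ny Hp; split=> //; exact: bwf_bfresh.
- move=> z; rewrite bvars_BOrs => /mem_flatten_map [a].
  case=> /List.in_app_iff [/List.in_map_iff [z' [<- /InP Hz']]|/List.in_map_iff [p [<- Hp]]].
    rewrite bvars_brename => /mapP [v Hv ->]; rewrite /subst_var.
    by case: eqP => [//|/eqP nvy]; rewrite mem_filter nvy.
  rewrite /= mem_cat => /orP[|/bvars_bfresh //].
  by have [_ _ V _] := bcases_props Hw ny Hp; apply: V.
- move=> z; rewrite batom_vars_BOrs => /mem_flatten_map [a].
  case=> /List.in_app_iff [/List.in_map_iff [z' [<- _]]|/List.in_map_iff [p [<- Hp]]].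
    rewrite batom_vars_brename => /mapP [v Hv ->]; rewrite /subst_var.
    by case: eqP => [Ev|//]; move: ny; rewrite -Ev Hv.
  rewrite /= batom_vars_bfresh cats0.
  by have [_ _ _ A] := bcases_props Hw ny Hp; apply: A.
Qed.

End Elimination.

Section ShortBlocks.
Variables (S : Type) (ar : S -> nat).
Notation form := (form ar).
Notation bform := (bform ar).
Implicit Types (l : bform).

Lemma bvars_bsubst y z V l :
  {subset bvars l <= y :: V} -> z \in V -> {subset bvars (brename (subst_var y z) l) <= V}.
Proof.
move=> Hl Hz v; rewrite bvars_brename => /mapP [u /Hl]; rewrite inE /subst_var.
by case: eqP => [_ _ ->|_ /= Hu ->].
Qed.

Definition ex_one y l : form := FEx 1 (to_FOC2 (fun z => z == y) l).

Lemma FOC2_01_ex_one y l : bwf l -> FOC2_01 (ex_one y l).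
Proof. by move=> Hw; apply: FOC2_01_ex => //; apply: FOC2_01_to_FOC2. Qed.

Lemma ex_one_sat D (I : forall R : S, ('I_(ar R) -> D) -> Prop) x0 y l (e : nat -> D) :
  x0 != y -> bwf l -> {subset bvars l <= [:: x0; y]} ->
  ((exists d, bsat I (upd e y d) l) <-> sat I (fun _ => e x0) (ex_one y l)).
Proof.
move=> n0y Hw Hv.
have K d : bsat I (upd e y d) l <-> sat I (upd (fun _ => e x0) 1 d) (to_FOC2 (fun z => z == y) l).
  apply: to_FOC2_sat => // z /Hv; rewrite !inE => /orP[]/eqP->.
    by rewrite (negbTE n0y) /upd /= (negbTE n0y).
  by rewrite eqxx /upd /= eqxx.
by split=> -[d Hd]; exists d; apply/K.
Qed.

(* For [y1 := b] fixed, a witness for [y2] must avoid the value [a] of the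
   free variable: if [a] itself is a witness, two are required. *)
Definition ex_pair y1 l : form :=
  let c := to_FOC2 (fun z => z == y1) l in
  let c' := FAnd (FNeg (FEq ar 0 1)) c in
  FEx 1 (FAnd (FNeg (FEq ar 1 0))
    (FOr (FAnd c (FCnt 2 0 c')) (FAnd (FNeg c) (FEx 0 c')))).

Lemma FOC2_01_ex_pair y1 l : bwf l -> FOC2_01 (ex_pair y1 l).
Proof.
move=> Hw; have Hc := FOC2_01_to_FOC2 (fun z => z == y1) Hw.
have Hc' := FOC2_01_and (FOC2_01_neg (FOC2_01_eq ar false true)) Hc.
apply/FOC2_01_ex/FOC2_01_and; [by [] | exact: (FOC2_01_neg (FOC2_01_eq ar true false)) |].
apply/FOC2_01_neg/FOC2_01_and; apply/FOC2_01_neg/FOC2_01_and => //.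
  exact: FOC2_01_cnt.
exact: FOC2_01_ex.
Qed.

Lemma ex_pair_sat D (I : forall R : S, ('I_(ar R) -> D) -> Prop) y1 y2 l (e : nat -> D) a :
  bwf l -> y1 != y2 -> {subset bvars l <= [:: y1; y2]} ->
  (sat I (fun _ => a) (ex_pair y1 l) <->
   exists b q, [/\ b <> a, q <> a, q <> b & bsat I (upd (upd e y1 b) y2 q) l]).
Proof.
move=> Hw n12 Hv; pose chi b q := bsat I (upd (upd e y1 b) y2 q) l.
have Hc E : sat I E (to_FOC2 (fun z => z == y1) l) <-> chi (E 1) (E 0).
  symmetry; apply: to_FOC2_sat => // z /Hv; rewrite !inE => /orP[]/eqP->.
    by rewrite eqxx /= /upd (negbTE n12) eqxx.
  by rewrite eq_sym (negbTE n12) /= /upd eqxx.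
have body b : b <> a ->
    (sat I (upd (fun _ => a) 1 b)
      (FOr (FAnd (to_FOC2 (fun z => z == y1) l)
                 (FCnt 2 0 (FAnd (FNeg (FEq ar 0 1)) (to_FOC2 (fun z => z == y1) l))))
           (FAnd (FNeg (to_FOC2 (fun z => z == y1) l))
                 (FEx 0 (FAnd (FNeg (FEq ar 0 1)) (to_FOC2 (fun z => z == y1) l))))) <->
     exists q, q <> a /\ (q <> b /\ chi b q)).
  move=> nba; rewrite FOr_sat exists_avoid /= !Hc /=.
  have Pa : chi b a <-> a <> b /\ chi b a by split=> [|[]] //; split=> // E; apply: nba.
  rewrite -Pa; split=> -[[Ha Hq]|[Ha Hq]]; [left | right | left | right]; split=> //.
  - by apply/two_injective; case: Hq => h [hi Hh]; exists h; split=> // i; case: (Hh i) => /= ? /Hc.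
  - by case: Hq => q [nq /Hc]; exists q.
  - by case/two_injective: Hq => h [hi Hh]; exists h; split=> // i; case: (Hh i) => ? ?; split=> //; apply/Hc.
  - by case: Hq => q [nq Hq]; exists q; split=> //; apply/Hc.
split=> [[b [nb /(body b nb) [q [nqa [nqb Hq]]]]]|[b [q [nba nqa nqb Hq]]]].
  by exists b, q.
by exists b; split=> //; apply/(body b nba); exists q.
Qed.

End ShortBlocks.

Section TwoVariableBlock.
Variables (S : Type) (ar : S -> nat).
Notation form := (form ar).
Notation bform := (bform ar).
Implicit Types (l : bform).

Definition ex_two x0 y1 y2 l : form :=
  FOrs (List.app
    [:: ex_one y1 (brename (subst_var y2 x0) l); ex_one y1 (brename (subst_var y2 y1) l);
        ex_one y2 (brename (subst_var y1 x0) l)]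
    (List.map (fun p => FAnd (at_var false p.1) (ex_pair y1 p.2)) (bcases x0 l))).

Lemma FOC2_01_ex_two x0 y1 y2 l : bwf l -> x0 \notin batom_vars l -> FOC2_01 (ex_two x0 y1 y2 l).
Proof.
move=> Hw nx; apply: FOC2_01_ors => f /List.in_app_iff [[<-|[<-|[<-|[]]]]|];
  try by apply: FOC2_01_ex_one; rewrite bwf_brename.
move=> /List.in_map_iff [p [<- Hp]]; have [H1 H2 _ _] := bcases_props Hw nx Hp.
by apply: FOC2_01_and; [apply: FOC2_01_at_var | apply: FOC2_01_ex_pair].
Qed.

Section Sat.
Variables (D : Type) (I : forall R : S, ('I_(ar R) -> D) -> Prop) (e : nat -> D).
Variables (x0 y1 y2 : nat) (l : bform).
Hypotheses (n01 : x0 != y1) (n02 : x0 != y2) (n12 : y1 != y2).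
Hypotheses (Hw : bwf l) (Hv : {subset bvars l <= [:: x0; y1; y2]}).
Hypothesis (nx : x0 \notin batom_vars l).

Let L d1 d2 := bsat I (upd (upd e y1 d1) y2 d2) l.

Let Lx0 d1 d2 : upd (upd e y1 d1) y2 d2 x0 = e x0.
Proof. by rewrite /upd (negbTE n02) (negbTE n01). Qed.

Lemma ex_two_y2_x0 :
  (exists d1, L d1 (e x0)) <-> sat I (fun _ => e x0) (ex_one y1 (brename (subst_var y2 x0) l)).
Proof.
rewrite -ex_one_sat ?bwf_brename //; last first.
  apply: bvars_bsubst; last by rewrite !inE eqxx.
  by move=> z /Hv; rewrite !inE; case/or3P=> ->; rewrite ?orbT.
by split=> -[d Hd]; exists d; move: Hd; rewrite bsubst_sat /upd (negbTE n01).
Qed.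

Lemma ex_two_y2_y1 :
  (exists d1, L d1 d1) <-> sat I (fun _ => e x0) (ex_one y1 (brename (subst_var y2 y1) l)).
Proof.
rewrite -ex_one_sat ?bwf_brename //; last first.
  apply: bvars_bsubst; last by rewrite !inE eqxx orbT.
  by move=> z /Hv; rewrite !inE; case/or3P=> ->; rewrite ?orbT.
by split=> -[d Hd]; exists d; move: Hd; rewrite bsubst_sat /upd eqxx.
Qed.

Lemma ex_two_y1_x0 :
  (exists d2, L (e x0) d2) <-> sat I (fun _ => e x0) (ex_one y2 (brename (subst_var y1 x0) l)).
Proof.
rewrite -ex_one_sat ?bwf_brename //; last first.
  apply: bvars_bsubst; last by rewrite !inE eqxx.
  by move=> z /Hv; rewrite !inE; case/or3P=> ->; rewrite ?orbT.
have Hx d : upd e y2 d x0 = e x0 by rewrite /upd (negbTE n02).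
have Lswap d1 d2 : L d1 d2 <-> bsat I (upd (upd e y2 d2) y1 d1) l.
  by apply: bsat_ext => z _; apply: upd_comm.
by split=> -[d Hd]; exists d; move: Hd; rewrite bsubst_sat Hx -Lswap.
Qed.

Lemma ex_two_distinct :
  (exists d1 d2, [/\ d1 <> e x0, d2 <> e x0, d2 <> d1 & L d1 d2]) <->
  exists p, List.In p (bcases x0 l) /\
    sat I (fun _ => e x0) (FAnd (at_var false p.1) (ex_pair y1 p.2)).
Proof.
have Pv p : List.In p (bcases x0 l) -> {subset bvars p.2 <= [:: y1; y2]}.
  move=> Hp z; have [_ _ V _] := bcases_props Hw nx Hp.
  by move/V; rewrite mem_filter => /andP[nz /Hv]; rewrite !inE (negbTE nz).
have new d1 d2 : d1 <> e x0 -> d2 <> e x0 -> forall z, z \in bvars l -> z != x0 ->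
    upd (upd e y1 d1) y2 d2 x0 <> upd (upd e y1 d1) y2 d2 z.
  move=> h1 h2 z /Hv; rewrite Lx0 !inE => /or3P[/eqP->|/eqP->|/eqP->]; rewrite ?eqxx //.
    by rewrite /upd (negbTE n12) eqxx => _ E; apply: h1.
  by rewrite /upd eqxx => _ E; apply: h2.
split=> [[d1 [d2 [h1 h2 h21 Hs]]]|[p [Hp [Hp1 Hp2]]]].
  have [p [Hp Hp1]] := bcases_cover I x0 l (e x0).
  have [C W _ _] := bcases_props Hw nx Hp.
  exists p; split=> //; split; first exact/(at_var_sat I false _ C).
  apply/(ex_pair_sat I e (e x0) W n12 (Pv p Hp)); exists d1, d2; split=> //.
  by apply/(bcases_sat (new d1 d2 h1 h2) Hp) => //; rewrite Lx0.
have [C W _ _] := bcases_props Hw nx Hp.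
move/(at_var_sat I false _ C): Hp1 => Hp1.
case/(ex_pair_sat I e (e x0) W n12 (Pv p Hp)): Hp2 => b [q [nb nq nqb Hs]].
exists b, q; split=> //.
by apply/(bcases_sat (new b q nb nq) Hp) => //; rewrite Lx0.
Qed.

Lemma ex_two_sat : (exists d1 d2, L d1 d2) <-> sat I (fun _ => e x0) (ex_two x0 y1 y2 l).
Proof.
rewrite FOrs_sat; split=> [[d1 [d2 Hs]]|[f [Hf Hs]]].
- have [E2|h2] := classic (d2 = e x0).
    exists (ex_one y1 (brename (subst_var y2 x0) l)); split; first by left.
    by apply/ex_two_y2_x0; exists d1; rewrite -E2.
  have [E21|h21] := classic (d2 = d1).
    exists (ex_one y1 (brename (subst_var y2 y1) l)); split; first by right; left.
    by apply/ex_two_y2_y1; exists d1; rewrite -{2}E21.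
  have [E1|h1] := classic (d1 = e x0).
    exists (ex_one y2 (brename (subst_var y1 x0) l)); split; first by right; right; left.
    by apply/ex_two_y1_x0; exists d2; rewrite -E1.
  have [p [Hp Hsp]] : exists p, List.In p (bcases x0 l) /\
      sat I (fun _ => e x0) (FAnd (at_var false p.1) (ex_pair y1 p.2)).
    by apply/ex_two_distinct; exists d1, d2.
  exists (FAnd (at_var false p.1) (ex_pair y1 p.2)); split=> //.
  by apply/List.in_app_iff; right; apply/List.in_map_iff; exists p.
- case/List.in_app_iff: Hf Hs => [[<-|[<-|[<-|[]]]]|/List.in_map_iff [p [<- Hp]]] Hs.
  + by case/ex_two_y2_x0: Hs => d Hd; exists d, (e x0).
  + by case/ex_two_y2_y1: Hs => d Hd; exists d, d.
  + by case/ex_two_y1_x0: Hs => d Hd; exists (e x0), d.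
  + have [|d1 [d2 [_ _ _ Hd]]] := proj2 ex_two_distinct; first by exists p.
    by exists d1, d2.
Qed.

End Sat.

End TwoVariableBlock.

Section Blocks.
Variables (S : Type) (ar : S -> nat).
Notation form := (form ar).
Notation bform := (bform ar).
Implicit Types (l : bform) (Q W : seq nat).

Definition expresses_ex x0 Q l (Phi : form) : Prop :=
  forall D (I : forall R : S, ('I_(ar R) -> D) -> Prop) (e : nat -> D),
    (exists e', (forall z, z \notin Q -> e' z = e z) /\ bsat I e' l) <->
    sat I (fun _ => e x0) Phi.

Lemma close_block W x0 Q l :
  size W <= 2 -> uniq Q -> x0 \notin Q -> {subset Q <= W} -> bwf l ->
  {subset bvars l <= x0 :: Q} -> {subset batom_vars l <= W} ->
  exists Phi, FOC2_01 Phi /\ expresses_ex x0 Q l Phi.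
Proof.
move=> sW uQ nxQ QW Hw Hv Ha.
have sQ : size Q <= 2 := leq_trans (uniq_leq_size uQ QW) sW.
case: Q sQ uQ nxQ QW Hv => [|y1 [|y2 [|y3 Q']]] // _ uQ nxQ QW Hv.
- exists (to_FOC2 (fun _ => false) l); split; first exact: FOC2_01_to_FOC2.
  move=> D I e; rewrite -to_FOC2_sat //.
  have -> : bsat I (fun _ => e x0) l <-> bsat I e l.
    by apply: bsat_ext => z /Hv; rewrite mem_seq1 => /eqP->.
  split=> [[e' [He Hs]]|Hs]; last by exists e.
  by apply/(bsat_ext I (e := e')) => // z _; apply: He.
- have n01 : x0 != y1 by move: nxQ; rewrite inE.
  exists (ex_one y1 l); split; first exact: FOC2_01_ex_one.
  move=> D I e; rewrite -ex_one_sat //; split=> [[e' [He Hs]]|[d Hd]].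
    exists (e' y1); apply/(bsat_ext I (e := e')) => // z _.
    by rewrite /upd; case: eqP => [->//|/eqP nz]; apply: He; rewrite inE.
  by exists (upd e y1 d); split=> // z; rewrite inE /upd => /negbTE ->.
- have n01 : x0 != y1 by move: nxQ; rewrite !inE negb_or => /andP[].
  have n02 : x0 != y2 by move: nxQ; rewrite !inE negb_or => /andP[].
  have n12 : y1 != y2 by move: uQ => /andP[]; rewrite inE.
  have na : x0 \notin batom_vars l.
    apply/negP => /Ha xW.
    have : size [:: x0; y1; y2] <= size W.
      apply: uniq_leq_size; first by rewrite /= !inE negb_or n01 n02 n12.
      by move=> z; rewrite !inE => /or3P[]/eqP-> //; apply: QW; rewrite !inE eqxx ?orbT.
    by move/leq_trans/(_ sW).
  exists (ex_two x0 y1 y2 l); split; first exact: FOC2_01_ex_two.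
  move=> D I e; rewrite -ex_two_sat //; split=> [[e' [He Hs]]|[d1 [d2 Hd]]].
    exists (e' y1), (e' y2); apply/(bsat_ext I (e := e')) => // z _.
    rewrite /upd; case: eqP => [->//|/eqP nz2]; case: eqP => [->//|/eqP nz1].
    by apply: He; rewrite !inE negb_or nz1 nz2.
  exists (upd (upd e y1 d1) y2 d2); split=> // z.
  by rewrite !inE negb_or /upd => /andP[/negbTE -> /negbTE ->].
Qed.

Lemma elim_block W x0 : size W <= 2 ->
  forall Q l, uniq Q -> x0 \notin Q -> bwf l ->
  {subset bvars l <= x0 :: Q} -> {subset batom_vars l <= W} -> {subset W <= x0 :: Q} ->
  exists Phi, FOC2_01 Phi /\ expresses_ex x0 Q l Phi.
Proof.
move=> sW Q; elim: {Q}(size Q) {-2}Q (leqnn (size Q)) => [|n IH] Q.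
  by rewrite leqn0 => /nilP -> l uQ nxQ Hw Hv Ha _; apply: (close_block sW).
move=> hn l uQ nxQ Hw Hv Ha HW.
have [/hasP [y yQ yW] | /hasPn allW] := boolP (has (fun y => y \notin W) Q); last first.
  by apply: (close_block sW) => // z /allW; rewrite negbK.
have ny : y \notin batom_vars l by apply: contra yW => /Ha.
have [Hw' Hv' Ha'] := elim_var_props Hw ny.
set Q' := [seq z <- Q | z != y].
have hn' : size Q' <= n.
  rewrite -ltnS (leq_trans _ hn) // size_filter -(count_predC (fun z => z != y) Q) -addn1.
  by rewrite leq_add2l -has_count; apply/hasP; exists y => //=; rewrite negbK.
have nxQ' : x0 \notin Q' by rewrite mem_filter negb_and nxQ orbT.
have Hv2 : {subset bvars (elim_var y l) <= x0 :: Q'}.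
  move=> z /Hv'; rewrite mem_filter => /andP[nzy /Hv].
  by rewrite !inE mem_filter nzy.
have HW2 : {subset W <= x0 :: Q'}.
  move=> z Hz; move: (HW z Hz); rewrite !inE mem_filter.
  by have -> : z != y by apply: contraNneq yW => <-.
have [Phi [CPhi HPhi]] := IH Q' hn' (elim_var y l) (filter_uniq _ uQ) nxQ' Hw' Hv2
  (fun z Hz => Ha z (Ha' z Hz)) HW2.
exists Phi; split=> // D I e; rewrite -HPhi; split.
- move=> [e' [He Hs]]; exists (upd e' y (e y)); split.
    move=> z; rewrite mem_filter negb_and negbK /upd; case: eqP => [->//|/eqP nz] /= nzQ.
    exact: He.
  apply/(elim_var_sat I _ Hw ny); exists (e' y); apply/(bsat_ext I (e := e')) => // z _.
  by rewrite /upd; case: eqP => [->|].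
- move=> [e'' [He Hs]]; move/(elim_var_sat I _ Hw ny): Hs => [d Hd].
  exists (upd e'' y d); split=> // z nzQ; rewrite /upd; case: eqP => [Ez|_].
    by move: yQ nzQ; rewrite Ez => ->.
  by apply: He; rewrite mem_filter negb_and nzQ orbT.
Qed.

End Blocks.

Section UF1ToFOC2.
Variables (S : Type) (ar : S -> nat).
Hypothesis ar_le2 : forall R : S, ar R <= 2.
Notation form := (form ar).
Notation bform := (bform ar).

Definition represents (f : form) (L : seq nat) (l : bform) : Prop :=
  [/\ bwf l, {subset bvars l <= L}, batom_vars l = [::] &
      forall D (I : forall R : S, ('I_(ar R) -> D) -> Prop) e, sat I e f <-> bsat I e l].

Lemma BoolComb_represented x0 xs (U F : seq form) w1 w2 phi :
  w1 \in x0 :: xs -> w2 \in x0 :: xs ->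
  (forall u, List.In u U -> exists l, represents u (x0 :: xs) l) ->
  (forall a, List.In a F -> exists R (args : 'I_(ar R) -> nat),
      a = FAtom args /\ forall i, args i = w1 \/ args i = w2) ->
  BoolComb (fun g => List.In g U \/ List.In g F) phi ->
  exists l, [/\ bwf l, {subset bvars l <= x0 :: xs}, {subset batom_vars l <= [:: w1; w2]} &
      forall D (I : forall R : S, ('I_(ar R) -> D) -> Prop) e, sat I e phi <-> bsat I e l].
Proof.
move=> iw1 iw2 HU HF.
elim=> [g [gU|gF]|g _ [l [W V A E]]|g h _ [lg [Wg Vg Ag Eg]] _ [lh [Wh Vh Ah Eh]]].
- by have [l [W V A E]] := HU g gU; exists l; split=> //; rewrite A.
- have [R [args [-> Hargs]]] := HF g gF; exists (BAtom args); split=> //.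
  + by move=> z /mapP [i _ ->]; case: (Hargs i) => ->.
  + by move=> z /mapP [i _ ->]; case: (Hargs i) => ->; rewrite !inE eqxx ?orbT.
- by exists (BNeg l); split=> // D I e /=; rewrite E.
- exists (BAnd lg lh); split=> //.
  + by move=> z /=; rewrite mem_cat => /orP[/Vg|/Vh].
  + by move=> z /=; rewrite mem_cat => /orP[/Ag|/Ah].
  + by move=> D I e /=; rewrite Eg Eh.
Qed.

Lemma exs_block_FOC2 x0 xs (U : seq form) V F phi :
  uniq (x0 :: xs) ->
  (forall u, List.In u U -> exists l, represents u (x0 :: xs) l) ->
  {subset V <= x0 :: xs} ->
  (forall a, List.In a F -> uniform_atom V a) ->
  BoolComb (fun g => List.In g U \/ List.In g F) phi ->
  exists Phi, FOC2_01 Phi /\ forall D (I : forall R : S, ('I_(ar R) -> D) -> Prop) e,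
     sat I e (exs xs phi) <-> sat I (fun _ => e x0) Phi.
Proof.
move=> /andP[nx uxs] HU HV HF Hbc.
have [w1 [w2 [iw1 iw2 HW]]] := uniform_atoms_two_vars ar_le2 HV HF.
have [l [Wl Vl Al El]] := BoolComb_represented iw1 iw2 HU HW Hbc.
have Wsub : {subset [:: w1; w2] <= x0 :: xs} by move=> z; rewrite !inE => /orP[]/eqP->.
have [Phi [CPhi HPhi]] := elim_block (erefl : size [:: w1; w2] <= 2) uxs nx Wl Vl Al Wsub.
exists Phi; split=> // D I e; rewrite -HPhi exs_sat.
by split=> -[e' [He Hs]]; exists e'; split=> //; apply/El.
Qed.

Lemma UF1eq_represented (f : form) : UF1eq f ->
  forall L : seq nat, {subset fv f <= L} -> exists l, represents f L l.
Proof.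
move=> Hf; elim/UF1eq_induction: f / Hf => [||R args [x Hx]|x y|g IH|g h IHg IHh|x0 xs U V F phi Hu HU HV HF Hbc].
- by exists (BBot ar); split.
- by exists (BTop ar); split.
- move=> L HL; have Ha i : args i = x by apply/Hx; apply: in_atom_vars.
  exists (BUnary (FAtom (fun _ : 'I_(ar R) => 0)) x); split=> //.
  + by split=> //= z /mapP [i _ ->]; rewrite inE.
  + by move=> z; rewrite inE => /eqP ->; apply/HL/Hx.
  + move=> D I e /=; suff -> : (fun i => e (args i)) = (fun _ => e x) by [].
    by apply: functional_extensionality => i; rewrite Ha.
- by exists (BEq ar x y); split.
- by move=> L /IH [l [W V A E]]; exists (BNeg l); split=> // D I e /=; rewrite E.
- move=> L HL.
  have [lg [Wg Vg Ag Eg]] := IHg L (fun z Hz => HL z (ltac:(by rewrite /= mem_cat Hz))).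
  have [lh [Wh Vh Ah Eh]] := IHh L (fun z Hz => HL z (ltac:(by rewrite /= mem_cat Hz orbT))).
  exists (BAnd lg lh); split=> //=.
  + by move=> z; rewrite mem_cat => /orP[/Vg|/Vh].
  + by rewrite Ag Ah.
  + by move=> D I e; rewrite Eg Eh.
have HU' u : List.In u U -> exists l, represents u (x0 :: xs) l.
  by case/HU => IHu Hfv; apply: IHu.
have [Phi [CPhi HPhi]] := exs_block_FOC2 Hu HU' HV HF Hbc.
split=> L HL.
  case: (boolP (x0 \in L)) => [xL|nxL].
    by exists (BUnary Phi x0); split=> //; move=> z; rewrite inE => /eqP->.
  have nfv : x0 \notin fv (exs xs phi) by apply: contra nxL; apply: HL.
  exists (BSome Phi); split=> // D I e /=; split=> [Hs|[d Hd]].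
    by exists (e x0); rewrite -HPhi.
  have Hfix : {in fv (exs xs phi), upd e x0 d =1 e}.
    by move=> z Hz; rewrite /upd; case: eqP => // Ez; move: nfv; rewrite -Ez Hz.
  by rewrite -(sat_fv I Hfix) HPhi /upd eqxx.
exists (BSome Phi); split=> // D I e /=.
by split=> -[d Hd]; exists d; move: Hd; rewrite HPhi /upd eqxx.
Qed.

Theorem UF1eq_le_FOC2 : le_logic (@UF1eq S ar) (@FOC2 S ar).
Proof.
move=> f Hf Hs.
have Hfv : {subset fv f <= [::]} by move=> z; rewrite Hs.
have [l [W V A E]] := UF1eq_represented Hf Hfv.
have Vn : bvars l = [::] by case: (bvars l) V => // a s /(_ a (mem_head _ _)).
exists (to_FOC2 (fun _ => false) l); split; first exact/FOC2_01_FOC2/FOC2_01_to_FOC2.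
split.
  have := fv_to_FOC2 (m := fun _ => false) W; rewrite Vn /sentence.
  by case: (fv _) => // a s /(_ a (mem_head _ _)).
by move=> D I e; rewrite E; apply: to_FOC2_sat => // z; rewrite Vn.
Qed.

End UF1ToFOC2.

(** * Rich structures *)

Section RichStructures.
Local Open Scope Z_scope.

Record rich (E : Z -> Z -> Prop) : Prop := {
  rich_irrefl : forall x, ~ E x x;
  rich_asym : forall x y, ~ (E x y /\ E y x);
  rich_ext1 : forall b (P Q : Prop), ~ (P /\ Q) ->
    exists d, [/\ d <> b, E b d <-> P & E d b <-> Q];
  rich_ext2 : forall b (P Q : Prop), ~ (P /\ Q) ->
    exists d1 d2, [/\ d1 <> d2, d1 <> b, d2 <> b, E d1 d2 <-> P & E d2 d1 <-> Q] }.

Lemma rich_of_succ (E : Z -> Z -> Prop) :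
  (forall x, E x (x + 1)) -> (forall x y, E x y -> x < y <= x + 2) -> rich E.
Proof.
move=> Esucc Ebound.
have iffF x y (P : Prop) : ~ P -> y <= x \/ x + 2 < y -> (E x y <-> P).
  by move=> nP Hxy; split=> [/Ebound Hb|//]; exfalso; lia.
have iffS x (P : Prop) : P -> (E x (x + 1) <-> P) by split=> // _; apply: Esucc.
have iffS' x (P : Prop) : P -> (E (x - 1) x <-> P).
  by move=> HP; have := iffS (x - 1) P HP; rewrite Z.sub_add.
split.
- by move=> x /Ebound; lia.
- by move=> x y [/Ebound H1 /Ebound H2]; lia.
- move=> b P Q nPQ; have [HP|nP] := classic P; [|have [HQ|nQ] := classic Q].
  + by exists (b + 1); split; [lia | exact: iffS | apply: iffF; [tauto | lia]].
  + by exists (b - 1); split; [lia | apply: iffF; [tauto | lia] | exact: iffS'].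
  + by exists (b + 5); split; [lia | apply: iffF; [tauto | lia] | apply: iffF; [tauto | lia]].
- move=> b P Q nPQ; have [HP|nP] := classic P; [|have [HQ|nQ] := classic Q].
  + exists (b + 10), (b + 10 + 1); split; try lia; first exact: iffS.
    by apply: iffF; [tauto | lia].
  + exists (b + 10 + 1), (b + 10); split; try lia; last exact: iffS.
    by apply: iffF; [tauto | lia].
  + by exists (b + 10), (b + 20); split; try lia; apply: iffF; [tauto | lia | tauto | lia].
Qed.

Definition zcode (a : Z) : Z := if 0 <=? a then 2 * a else - 2 * a - 1.

Lemma zcode_inj : injective zcode.
Proof. by move=> a b; rewrite /zcode; case: (Z.leb_spec 0 a); case: (Z.leb_spec 0 b); lia. Qed.

Lemma zcode_ge0 a : 0 <= zcode a.
Proof. by rewrite /zcode; case: (Z.leb_spec 0 a); lia. Qed.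

Definition partial_inj (s : list (Z * Z)) : Prop :=
  forall p q, List.In p s -> List.In q s -> (p.1 = q.1 <-> p.2 = q.2).

Fixpoint lookup (s : list (Z * Z)) (d x : Z) : Z :=
  if s is p :: s' then if Z.eq_dec x p.1 then p.2 else lookup s' d x else d.

Lemma lookupP s d x :
  (exists p, [/\ List.In p s, p.1 = x & lookup s d x = p.2]) \/
  ((forall p, List.In p s -> p.1 <> x) /\ lookup s d x = d).
Proof.
elim: s => [|p s IH] /=; first by right.
case: Z.eq_dec => [Ex|nx].
  by left; exists p; split=> //; left.
case: IH => [[q [Hq Eq Hl]]|[Hn Hl]].
  by left; exists q; split=> //; right.
by right; split=> // q [<-|/Hn] // E; apply: nx.
Qed.

Definition range_bound (s : list (Z * Z)) : Z :=
  List.fold_right (fun q m => Z.abs q.2 + m) 0 s.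

Lemma range_bound_ge0 s : 0 <= range_bound s.
Proof. by elim: s => //= q s IH; have := Z.abs_nonneg q.2; lia. Qed.

Lemma range_bound_ge s p : List.In p s -> Z.abs p.2 <= range_bound s.
Proof.
elim: s => //= q s IH [->|/IH]; first by have := @range_bound_ge0 s; lia.
by have := Z.abs_nonneg q.2; lia.
Qed.

Lemma extend_partial_inj s : partial_inj s ->
  exists h : Z -> Z, injective h /\ forall p, List.In p s -> h p.1 = p.2.
Proof.
move=> Hs; pose M := range_bound s + 1.
exists (fun x => lookup s (M + zcode x) x); split.
  move=> x y; case: (lookupP s (M + zcode x) x) => [[p [Hp <- ->]]|[_ ->]];
  case: (lookupP s (M + zcode y) y) => [[q [Hq <- ->]]|[_ ->]].
  - by move/(Hs p q Hp Hq).
  - by rewrite /M; have := range_bound_ge Hp; have := @zcode_ge0 y; lia.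
  - by rewrite /M; have := range_bound_ge Hq; have := @zcode_ge0 x; lia.
  - by move/Z.add_reg_l/zcode_inj.
move=> p Hp; case: (lookupP s (M + zcode p.1) p.1) => [[q [Hq Eq ->]]|[Hn _]].
  by apply/(Hs q p Hq Hp).
by case: (Hn p Hp).
Qed.

Lemma rich_match E1 E2 : rich E1 -> rich E2 -> forall a0 b0 c1 c2 : Z,
  exists u1 u2, [/\ c1 = a0 <-> u1 = b0, c2 = a0 <-> u2 = b0, c1 = c2 <-> u1 = u2,
                    E1 c1 c2 <-> E2 u1 u2 & E1 c2 c1 <-> E2 u2 u1].
Proof.
move=> r1 r2 a0 b0 c1 c2.
have irr c u : E1 c c <-> E2 u u by split=> /rich_irrefl.
have [<-|n12] := classic (c1 = c2).
  have [e1|n1] := classic (c1 = a0).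
    by exists b0, b0; split; [lia | lia | lia | apply: irr | apply: irr].
  by exists (b0 + 1), (b0 + 1); split; [lia | lia | lia | apply: irr | apply: irr].
have [e1|n1] := classic (c1 = a0).
  have [d [db D1 D2]] := rich_ext1 r2 b0 (rich_asym r1 (x := c1) (y := c2)).
  by exists b0, d; split; [lia | lia | lia | rewrite D1 | rewrite D2].
have [e2|n2] := classic (c2 = a0).
  have [d [db D1 D2]] := rich_ext1 r2 b0 (rich_asym r1 (x := c2) (y := c1)).
  by exists d, b0; split; [lia | lia | lia | rewrite D2 | rewrite D1].
have [d1 [d2 [d12 db1 db2 D1 D2]]] := rich_ext2 r2 b0 (rich_asym r1 (x := c1) (y := c2)).
by exists d1, d2; split; [lia | lia | lia | rewrite D1 | rewrite D2].
Qed.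

Lemma rich_partial_iso E1 E2 : rich E1 -> rich E2 -> forall a0 b0 c1 c2 : Z,
  exists h : Z -> Z, [/\ injective h, h a0 = b0 &
    forall p q, (p = c1 \/ p = c2) -> (q = c1 \/ q = c2) -> (E1 p q <-> E2 (h p) (h q))].
Proof.
move=> r1 r2 a0 b0 c1 c2.
have [u1 [u2 [H1 H2 H12 E12 E21]]] := rich_match r1 r2 a0 b0 c1 c2.
have [h [hi hs]] : exists h, injective h /\
    forall p, List.In p [:: (a0, b0); (c1, u1); (c2, u2)] -> h p.1 = p.2.
  by apply: extend_partial_inj => p q /= [<-|[<-|[<-|[]]]] [<-|[<-|[<-|[]]]] /=; lia.
have irr c u : E1 c c <-> E2 u u by split=> /rich_irrefl.
exists h; split=> //; first exact: (hs (a0, b0) (or_introl erefl)).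
have hc1 : h c1 = u1 by apply: (hs (c1, u1)); right; left.
have hc2 : h c2 = u2 by apply: (hs (c2, u2)); right; right; left.
by move=> p q [->|->] [->|->]; rewrite ?hc1 ?hc2.
Qed.

End RichStructures.

Section Separation.
Variables (S : Type) (ar : S -> nat).
Hypothesis ar_le2 : forall R : S, ar R <= 2.
Notation form := (form ar).

(* Unary relation symbols are interpreted as empty. *)
Definition edge_interp (E : Z -> Z -> Prop) : forall R : S, ('I_(ar R) -> Z) -> Prop :=
  fun R a => exists i j : 'I_(ar R), [/\ val i = 0, val j = 1 & E (a i) (a j)].

Definition pattern_invariant (f : form) : Prop :=
  forall E1 E2, rich E1 -> rich E2 -> forall e1 e2 : nat -> Z,
   (forall u v, u \in fv f -> v \in fv f -> (e1 u = e1 v <-> e2 u = e2 v)) ->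
   (sat (edge_interp E1) e1 f <-> sat (edge_interp E2) e2 f).

Lemma exs_block_transfer E1 E2 : rich E1 -> rich E2 ->
  forall x0 xs (U : seq form) V F phi, x0 \notin xs ->
  (forall u, List.In u U -> pattern_invariant u /\ {subset fv u <= x0 :: xs}) ->
  {subset V <= x0 :: xs} ->
  (forall a, List.In a F -> uniform_atom V a) ->
  BoolComb (fun g => List.In g U \/ List.In g F) phi ->
  forall e1 e2, sat (edge_interp E1) e1 (exs xs phi) -> sat (edge_interp E2) e2 (exs xs phi).
Proof.
move=> r1 r2 x0 xs U V F phi nx HU HV HF Hbc e1 e2 /exs_sat [e1' [Ha1 Hs1]].
have [w1 [w2 [iw1 iw2 HW]]] := uniform_atoms_two_vars ar_le2 HV HF.
have [h [hinj ha0 hpair]] := rich_partial_iso r1 r2 (e1 x0) (e2 x0) (e1' w1) (e1' w2).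
pose e2' v := if v \in xs then h (e1' v) else e2 v.
have He2' v : v \in x0 :: xs -> e2' v = h (e1' v).
  rewrite inE => /orP[/eqP->|vx]; last by rewrite /e2' vx.
  by rewrite /e2' (negbTE nx) Ha1.
apply/exs_sat; exists e2'; split; first by move=> z /negbTE zx; rewrite /e2' zx.
suff Hphi : sat (edge_interp E1) e1' phi <-> sat (edge_interp E2) e2' phi by apply/Hphi.
apply: (BoolComb_sat_iff Hbc) => g [gU|gF].
  have [Gg Hfv] := HU g gU; apply: Gg => // u v Hu Hv.
  by rewrite !He2' ?Hfv //; split=> [->//|/hinj].
have [R [args [-> Hargs]]] := HW g gF.
have Hin i : args i \in x0 :: xs by case: (Hargs i) => ->.
have Hw i : e1' (args i) = e1' w1 \/ e1' (args i) = e1' w2 by case: (Hargs i) => ->; [left|right].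
by split=> -[i [j [vi vj HE]]]; exists i, j; split=> //; move: HE; rewrite /= !He2' // hpair.
Qed.

Lemma edge_interp_unary E (R : S) (args : 'I_(ar R) -> nat) e :
  rich E -> (exists x, forall z, z \in atom_vars args <-> z = x) ->
  ~ sat (edge_interp E) e (FAtom args).
Proof.
move=> rE [x Hx] [i [j [_ _]]].
have Ha k : args k = x by apply/Hx; apply: in_atom_vars.
by rewrite /= !Ha; apply: rich_irrefl.
Qed.

Lemma UF1eq_pattern_invariant (f : form) : UF1eq f -> pattern_invariant f.
Proof.
move=> Hf; elim/UF1eq_induction: f / Hf => [||R args Hx|x y|g IH|g h IHg IHh
    |x0 xs U V F phi /andP[nx _] HU HV HF Hbc].
1-6: move=> E1 E2 r1 r2 e1 e2 Hp.
- by [].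
- by [].
- by split=> /edge_interp_unary; [case/(_ r1 Hx) | case/(_ r2 Hx)].
- by apply: Hp; rewrite !inE eqxx ?orbT.
- by rewrite /= (IH E1 E2 r1 r2 e1 e2 Hp).
- rewrite /= (IHg E1 E2 r1 r2 e1 e2) ?(IHh E1 E2 r1 r2 e1 e2) // => u v Hu' Hv';
    by apply: Hp; rewrite mem_cat ?Hu' ?Hv' ?orbT.
have transfer := exs_block_transfer _ _ nx HU HV HF Hbc.
split=> E1 E2 r1 r2 e1 e2 Hp; first by split; apply: transfer.
by split=> -[d Hd]; exists 0%Z; [apply: (transfer E1) Hd | apply: (transfer E2) Hd].
Qed.

Definition succ_edge (x y : Z) : Prop := y = (x + 1)%Z.
Definition succ_skip_edge (x y : Z) : Prop := y = (x + 1)%Z \/ (x = 0 /\ y = 2)%Z.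

Lemma rich_succ_edge : rich succ_edge.
Proof. by apply: rich_of_succ => [//|x y]; rewrite /succ_edge; lia. Qed.

Lemma rich_succ_skip_edge : rich succ_skip_edge.
Proof. by apply: rich_of_succ => [x|x y]; rewrite /succ_skip_edge; lia. Qed.

Definition two_successors (R : S) : form :=
  FEx 0 (FCnt 2 1 (FAtom (fun i : 'I_(ar R) => if val i == 0 then 0 else 1))).

Lemma FOC2_two_successors R : FOC2 (two_successors R).
Proof.
split=> //; exists 0, 1 => z /=; rewrite !inE => /orP[->//|/orP[->|]]; rewrite ?orbT //.
by case/mapP=> i _ ->; case: (val i == 0).
Qed.

Lemma sentence_two_successors R : sentence (two_successors R).
Proof.
rewrite /sentence /= /atom_vars -filter_predI.
apply/eqP; rewrite -[_ == _]negbK -has_filter.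
by apply/hasPn => z /mapP [i _ ->] /=; case: (val i == 0).
Qed.

Lemma two_successors_skip R e :
  ar R = 2 -> sat (edge_interp succ_skip_edge) e (two_successors R).
Proof.
move=> HR; have i0 : 0 < ar R by rewrite HR.
have i1 : 1 < ar R by rewrite HR.
exists 0%Z, (fun i : 'I_2 => Z.of_nat (val i + 1)); split.
  by move=> i j /Nat2Z.inj /eqP; rewrite eqn_add2r => /eqP /val_inj.
move=> i; exists (Ordinal i0), (Ordinal i1); split=> //.
by rewrite /upd /succ_skip_edge /=; case: i => [[|[|k]] Hk] //=; [left|right]; lia.
Qed.

Lemma two_successors_succ R e :
  ar R = 2 -> ~ sat (edge_interp succ_edge) e (two_successors R).
Proof.
move=> HR [d [h [hinj H]]].
have Hk (k : 'I_2) : h k = (d + 1)%Z.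
  by have [i [j [vi vj]]] := H k; rewrite /upd /succ_edge vi vj.
by have := hinj ord0 ord_max; rewrite !Hk => /(_ erefl).
Qed.

Theorem FOC2_not_le_UF1eq : (exists R : S, ar R = 2) -> ~ le_logic (@FOC2 S ar) (@UF1eq S ar).
Proof.
move=> [R HR] Hle.
have [g [Hg [Hgs Heq]]] := Hle _ (FOC2_two_successors R) (sentence_two_successors R).
have Hpat : forall u v, u \in fv g -> v \in fv g -> (0%Z = 0%Z <-> 0%Z = 0%Z) by [].
have Hinv := UF1eq_pattern_invariant Hg rich_succ_skip_edge rich_succ_edge Hpat.
apply: (two_successors_succ (e := fun _ => 0%Z) HR).
by apply/Heq/Hinv/Heq; apply: two_successors_skip.
Qed.

End Separation.

Theorem mainTheorem8 (S : Type) (ar : S -> nat)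
  (ar_pos : forall R : S, 0 < ar R) (ar_le2 : forall R : S, ar R <= 2) :
  le_logic (@UF1eq S ar) (@FOC2 S ar) /\
  ((exists R : S, ar R = 2) -> ~ le_logic (@FOC2 S ar) (@UF1eq S ar)).
Proof.
split; [exact: UF1eq_le_FOC2 ar_le2 | exact: FOC2_not_le_UF1eq ar_le2].
Qed.
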